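(* For partial $H$-modules $(M,\pi)$ and $(N,\rho)$ with standard dilations $((\overline M,T_\pi),\varphi_M)$ and $((\overline N,T_\rho),\varphi_N)$, and a morphism of partial $H$-modules $f:M\to N$, the formula $$\overline f\Big(\sum_i h_i\triangleright\varphi_M(m_i)\Big)=\sum_i h_i\triangleright\varphi_N(f(m_i))$$ gives a well-defined $H$-linear map $\overline f:\overline M\to\overline N$. The assignment $D(M)=\overline M$, $D(f)=\overline f$ is a functor $D:{}_H\mathcal M^{par}\to{}_H\mathcal M$ (the dilation functor). Moreover $D$ is additive and faithful, it sends injective morphisms to injective morphisms and surjective morphisms to surjective morphisms, and it preserves arbitrary coproducts.
   Context: Throughout, $k$ is a field and $H$ is a Hopf algebra over $k$ with bijective antipode $S$ and Sweedler notation $\Delta(h)=h_{(1)}\otimes h_{(2)}$. A partial $H$-module is a vector space $M$ with linear $\pi:H\to\mathrm{End}_k(M)$ satisfying, for all $h,k\in H$: - $\pi(1_H)=\mathrm{id}$; - $\pi(h)\pi(k_{(1)})\pi(S(k_{(2)}))=\pi(hk_{(1)})\pi(S(k_{(2)}))$; - $\pi(h_{(1)})\pi(S(h_{(2)}))\pi(k)=\pi(h_{(1)})\pi(S(h_{(2)})k)$; - $\pi(h)\pi(S(k_{(1)}))\pi(k_{(2)})=\pi(hS(k_{(1)}))\pi(k_{(2)})$; - $\pi(S(h_{(1)}))\pi(h_{(2)})\pi(k)=\pi(S(h_{(1)}))\pi(h_{(2)}k)$. Morphisms are linear maps commuting with all $\pi(h)$; they form the category ${}_H\mathcal M^{par}$.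 Standard dilation of $(M,\pi)$: $\operatorname{Hom}_k(H,M)$ is a left $H$-module via $(h\triangleright f)(k)=f(kh)$. Let $\varphi_M:M\to\operatorname{Hom}_k(H,M)$ be $\varphi_M(m)(h)=\pi(h)(m)$. Let $\overline M=H\triangleright\varphi_M(M)$ be the $H$-submodule of $\operatorname{Hom}_k(H,M)$ generated by $\varphi_M(M)$, and $T_\pi:\overline M\to\overline M$, $T_\pi(f)=\varphi_M(f(1_H))$. *)

From HB Require Import structures.
From mathcomp Require Import all_boot all_algebra.
From Stdlib Require Import ClassicalEpsilon.
Set Implicit Arguments.
Unset Strict Implicit.
Unset Printing Implicit Defensive.
Import GRing.Theory.
Local Open Scope ring_scope.

(* The comultiplication Delta(h) = sum h_(1) (x) h_(2) is represented by a
   finite list of pairs (Sweedler representatives); equalities in H (x) H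
   (resp. H (x) H (x) H) are expressed through the universal property, i.e.
   by testing against all bilinear (resp. trilinear) maps into every
   k-vector space. *)

Record hopf_data (k : fieldType) (H : algType k) := HopfData {
  comul : H -> seq (H * H);
  counit : H -> k;
  antipode : H -> H
}.

Definition bilin (k : fieldType) (A : lmodType k) (V : lmodType k)
  (B : A -> A -> V) : Prop :=
  (forall a x y z, B (a *: x + y) z = a *: B x z + B y z) /\
  (forall a x y z, B z (a *: x + y) = a *: B z x + B z y).

Definition trilin (k : fieldType) (A : lmodType k) (V : lmodType k)
  (T : A -> A -> A -> V) : Prop :=
  (forall a x y u v, T (a *: x + y) u v = a *: T x u v + T y u v) /\
  (forall a x y u v, T u (a *: x + y) v = a *: T u x v + T u y v) /\
  (forall a x y u v, T u v (a *: x + y) = a *: T u v x + T u v y).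

(* [tsum B t] is the image of the tensor represented by [t] under the
   linear map H (x) H -> V induced by the bilinear map [B]. *)
Definition tsum (k : fieldType) (H : algType k) (V : lmodType k)
  (B : H -> H -> V) (t : seq (H * H)) : V :=
  \sum_(p <- t) B p.1 p.2.

Definition is_hopf (k : fieldType) (H : algType k) (hp : hopf_data H) : Prop :=
  let D := comul hp in let eps := counit hp in let S := antipode hp in
  [/\
      (forall (V : lmodType k) (B : H -> H -> V), bilin B ->
         forall a x y, tsum B (D (a *: x + y)) = a *: tsum B (D x) + tsum B (D y)),
      (forall (V : lmodType k) (T : H -> H -> H -> V), trilin T ->
         forall h, \sum_(p <- D h) \sum_(q <- D p.1) T q.1 q.2 p.2
                 = \sum_(p <- D h) \sum_(q <- D p.2) T p.1 q.1 q.2),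
      (forall a x y, eps (a *: x + y) = a * eps x + eps y) /\
      (forall h, \sum_(p <- D h) eps p.1 *: p.2 = h) /\
      (forall h, \sum_(p <- D h) eps p.2 *: p.1 = h),
      (forall (V : lmodType k) (B : H -> H -> V), bilin B ->
         (forall x y, tsum B (D (x * y))
            = \sum_(p <- D x) \sum_(q <- D y) B (p.1 * q.1) (p.2 * q.2)) /\
         tsum B (D 1) = B 1 1) /\
      (forall x y, eps (x * y) = eps x * eps y) /\ eps 1 = 1 &
      [/\ (forall a x y, S (a *: x + y) = a *: S x + S y),
          (forall h, \sum_(p <- D h) S p.1 * p.2 = eps h *: 1),
          (forall h, \sum_(p <- D h) p.1 * S p.2 = eps h *: 1) &
          bijective S]].

Definition is_pmod (k : fieldType) (H : algType k) (hp : hopf_data H)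
  (M : lmodType k) (pi : H -> M -> M) : Prop :=
  let D := comul hp in let S := antipode hp in
  [/\ (forall h a m n, pi h (a *: m + n) = a *: pi h m + pi h n),
      (forall a x y m, pi (a *: x + y) m = a *: pi x m + pi y m),
      (forall m, pi 1 m = m) &
   [/\ (forall h g m, \sum_(p <- D g) pi h (pi p.1 (pi (S p.2) m))
                   = \sum_(p <- D g) pi (h * p.1) (pi (S p.2) m)),
      (forall h g m, \sum_(p <- D h) pi p.1 (pi (S p.2) (pi g m))
                   = \sum_(p <- D h) pi p.1 (pi (S p.2 * g) m)),
      (forall h g m, \sum_(p <- D g) pi h (pi (S p.1) (pi p.2 m))
                   = \sum_(p <- D g) pi (h * S p.1) (pi p.2 m)) &
      (forall h g m, \sum_(p <- D h) pi (S p.1) (pi p.2 (pi g m))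
                   = \sum_(p <- D h) pi (S p.1) (pi (p.2 * g) m))]].

Definition is_pmorph (k : fieldType) (H : algType k)
  (M N : lmodType k) (pi : H -> M -> M) (rho : H -> N -> N) (f : M -> N) : Prop :=
  (forall a m n, f (a *: m + n) = a *: f m + f n) /\
  (forall h m, f (pi h m) = rho h (f m)).

Definition is_hmod (k : fieldType) (H : algType k)
  (X : lmodType k) (act : H -> X -> X) : Prop :=
  [/\ (forall h a x y, act h (a *: x + y) = a *: act h x + act h y),
      (forall a g h x, act (a *: g + h) x = a *: act g x + act h x),
      (forall x, act 1 x = x) &
      (forall g h x, act (g * h) x = act g (act h x))].

(* Elements of Hom_k(H, M) are (linear) functions H -> M; H acts by
   (h |> F)(x) = F (x h). *)
Definition hact (k : fieldType) (H : algType k) (M : lmodType k)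
  (h : H) (F : H -> M) : H -> M := fun x => F (x * h).

Definition varphi (k : fieldType) (H : algType k) (M : lmodType k)
  (pi : H -> M -> M) (m : M) : H -> M := fun x => pi x m.

Definition dil (k : fieldType) (H : algType k) (M : lmodType k)
  (pi : H -> M -> M) (s : seq (H * M)) : H -> M :=
  fun x => \sum_(p <- s) hact p.1 (varphi pi p.2) x.

(* membership in  Mbar = H |> varphi_M(M), the H-submodule of Hom_k(H,M)
   generated by varphi_M(M): its elements are exactly the finite sums
   sum_i h_i |> varphi_M(m_i). *)
Definition in_dil (k : fieldType) (H : algType k) (M : lmodType k)
  (pi : H -> M -> M) (F : H -> M) : Prop :=
  exists s : seq (H * M), F = dil pi s.

(* The map fbar: an element F of Mbar is written (by choice) as
   sum_i h_i |> varphi_M(m_i), and sent to sum_i h_i |> varphi_N(f m_i).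
   (Outside Mbar the value is irrelevant.) *)
Definition dilmap (k : fieldType) (H : algType k) (M N : lmodType k)
  (pi : H -> M -> M) (rho : H -> N -> N) (f : M -> N) (F : H -> M) : H -> N :=
  let s := epsilon (inhabits [::]) (fun s : seq (H * M) => F = dil pi s) in
  dil rho (map (fun p => (p.1, f p.2)) s).

Definition is_coprod_par (k : fieldType) (H : algType k) (hp : hopf_data H)
  (I : Type) (Ms : I -> lmodType k) (pis : forall i, H -> Ms i -> Ms i)
  (C : lmodType k) (piC : H -> C -> C) (iota : forall i, Ms i -> C) : Prop :=
  (forall i, is_pmorph (pis i) piC (iota i)) /\
  forall (X : lmodType k) (sig : H -> X -> X), is_pmod hp sig ->
  forall g : forall i, Ms i -> X, (forall i, is_pmorph (pis i) sig (g i)) ->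
  exists u : C -> X,
    [/\ is_pmorph piC sig u,
        (forall i m, u (iota i m) = g i m) &
        forall v : C -> X, is_pmorph piC sig v ->
          (forall i m, v (iota i m) = g i m) -> forall c, v c = u c].

Definition hlin_on (k : fieldType) (H : algType k) (M : lmodType k)
  (P : (H -> M) -> Prop) (X : lmodType k) (act : H -> X -> X)
  (u : (H -> M) -> X) : Prop :=
  (forall a F G, P F -> P G -> u (fun x => a *: F x + G x) = a *: u F + u G) /\
  (forall h F, P F -> u (hact h F) = act h (u F)).

Definition is_coprod_hmod (k : fieldType) (H : algType k)
  (I : Type) (Ms : I -> lmodType k) (pis : forall i, H -> Ms i -> Ms i)
  (C : lmodType k) (piC : H -> C -> C)
  (j : forall i, (H -> Ms i) -> (H -> C)) : Prop :=
  forall (X : lmodType k) (act : H -> X -> X), is_hmod act ->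
  forall g : forall i, (H -> Ms i) -> X,
    (forall i, hlin_on (in_dil (pis i)) act (g i)) ->
  exists u : (H -> C) -> X,
    [/\ hlin_on (in_dil piC) act u,
        (forall i F, in_dil (pis i) F -> u (j i F) = g i F) &
        forall v : (H -> C) -> X, hlin_on (in_dil piC) act v ->
          (forall i F, in_dil (pis i) F -> v (j i F) = g i F) ->
          forall G, in_dil piC G -> v G = u G].

From HB Require Import structures.
From mathcomp Require Import all_boot all_algebra boolp.
From Stdlib Require Import ClassicalEpsilon.
Import GRing.Theory.
Local Open Scope ring_scope.
Set Implicit Arguments.
Unset Strict Implicit.
Unset Printing Implicit Defensive.

(* For F = sum_i h_i |> phi_M(m_i) in Mbar, the value of
   sum_i h_i |> phi_N(f m_i) at x is sum_i rho(x h_i)(f m_i) = f (F x), since f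
   commutes with the partial actions.  So fbar is post-composition with f: it
   does not depend on the chosen representation of F, and functoriality,
   additivity, faithfulness (evaluate fbar (phi_M m) at 1) and preservation of
   injective and surjective maps follow at once.

   Let (C, iota_i) be a coproduct.  The finite sums of elements iota_i(m_i)
   form a partial submodule through which the universal property factors, so
   they exhaust C; and the universal property applied to the Kronecker maps
   M_i -> M_j yields projections p_j with p_j iota_i = delta_ij.  Hence every
   element of Cbar is a finite sum of terms h |> phi_C(iota_i m), and H-linear
   maps g_i on the Mbar_i glue to sum h . g_i(phi_M_i m); this is well defined
   because applying p_j to a vanishing sum isolates its terms indexed by j. *)

Section LinearHypothesis.
Variables (k : fieldType) (A B : lmodType k) (f : A -> B).
Hypothesis f_lin : linear f.

(* The linearity hypotheses of the definitions are [linear f] up to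
   conversion; packing them gives access to the theory of {linear A -> B}. *)
Let lf : {linear A -> B} := HB.pack f (GRing.isLinear.Build k A B *:%R f f_lin).

Lemma lin0 : f 0 = 0. Proof. exact: (linear0 lf). Qed.
Lemma linD x y : f (x + y) = f x + f y. Proof. exact: (linearD lf). Qed.
Lemma linZ a x : f (a *: x) = a *: f x. Proof. exact: (linearZZ lf). Qed.
Lemma lin_sum (I : Type) (r : seq I) (F : I -> A) :
  f (\sum_(i <- r) F i) = \sum_(i <- r) f (F i).
Proof. exact: (linear_sum lf). Qed.

End LinearHypothesis.

Section Dilation.
Variables (k : fieldType) (H : algType k) (M : lmodType k) (pi : H -> M -> M).

Lemma dil_nil : dil pi [::] = fun _ => 0.
Proof. by apply: funext => x; rewrite /dil big_nil. Qed.

Lemma dil_cat s t : dil pi (s ++ t) = fun x => dil pi s x + dil pi t x.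
Proof. by apply: funext => x; rewrite /dil big_cat. Qed.

Lemma varphi_dil m : varphi pi m = dil pi [:: (1, m)].
Proof. by apply: funext => x; rewrite /dil big_seq1 /hact mulr1. Qed.

Lemma hact_dil h s : hact h (dil pi s) = dil pi [seq (h * p.1, p.2) | p <- s].
Proof.
by apply: funext => x; rewrite /hact /dil big_map; apply: eq_bigr => p _; rewrite /hact mulrA.
Qed.

Lemma in_dil0 : in_dil pi (fun _ => 0).
Proof. by exists [::]; rewrite dil_nil. Qed.

Lemma in_dil_varphi m : in_dil pi (varphi pi m).
Proof. by exists [:: (1, m)]; apply: varphi_dil. Qed.

Lemma in_dil_hact h F : in_dil pi F -> in_dil pi (hact h F).
Proof. by move=> [s ->]; rewrite hact_dil; eexists. Qed.

Hypothesis pi_lin : forall h, linear (pi h).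

Lemma varphi0 : varphi pi 0 = fun _ => 0.
Proof. by apply: funext => x; rewrite /varphi lin0. Qed.

Lemma varphiZ a m : varphi pi (a *: m) = fun x => a *: varphi pi m x.
Proof. by apply: funext => x; rewrite /varphi linZ. Qed.

Lemma dilZ a s : dil pi [seq (p.1, a *: p.2) | p <- s] = fun x => a *: dil pi s x.
Proof.
apply: funext => x; rewrite /dil big_map scaler_sumr.
by apply: eq_bigr => p _; rewrite /hact varphiZ.
Qed.

Lemma in_dil_comb a F G : in_dil pi F -> in_dil pi G -> in_dil pi (fun x => a *: F x + G x).
Proof.
move=> [s ->] [t ->]; exists ([seq (p.1, a *: p.2) | p <- s] ++ t).
by rewrite dil_cat dilZ.
Qed.

End Dilation.

Section PartialMorphisms.
Variables (k : fieldType) (H : algType k) (M N P : lmodType k).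
Variables (pi : H -> M -> M) (rho : H -> N -> N) (sig : H -> P -> P).

Lemma pmorph_id : is_pmorph pi pi id.
Proof. by []. Qed.

Lemma pmorph_comp (f : M -> N) (g : N -> P) :
  is_pmorph pi rho f -> is_pmorph rho sig g -> is_pmorph pi sig (g \o f).
Proof.
by move=> [f_lin f_act] [g_lin g_act]; split=> * /=; rewrite ?f_lin ?g_lin ?f_act ?g_act.
Qed.

Lemma pmorph_add (f g : M -> N) : (forall h, linear (rho h)) ->
  is_pmorph pi rho f -> is_pmorph pi rho g -> is_pmorph pi rho (fun m => f m + g m).
Proof.
move=> rho_lin [f_lin f_act] [g_lin g_act]; split=> [a m n|h m].
  by rewrite f_lin g_lin scalerDr addrACA.
by rewrite f_act g_act linD.
Qed.

End PartialMorphisms.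

Section HLinearMaps.
Variables (k : fieldType) (H : algType k) (M X : lmodType k).
Variables (pi : H -> M -> M) (act : H -> X -> X) (w : (H -> M) -> X).
Hypothesis w_hlin : hlin_on (in_dil pi) act w.

Lemma hlin_on0 : w (fun _ => 0) = 0.
Proof.
have := w_hlin.1 (-1) _ _ (in_dil0 pi) (in_dil0 pi).
by rewrite !scaleN1r !addNr; apply.
Qed.

Lemma hlin_onZ a F : in_dil pi F -> w (fun x => a *: F x) = a *: w F.
Proof.
move=> F_in; have := w_hlin.1 a _ _ F_in (in_dil0 pi); rewrite hlin_on0 addr0 => <-.
by congr w; apply: funext => x /=; rewrite addr0.
Qed.

Lemma hlin_on_dil s : w (dil pi s) = \sum_(p <- s) act p.1 (w (varphi pi p.2)).
Proof.
elim: s => [|p s IHs]; first by rewrite dil_nil hlin_on0 big_nil.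
have -> : dil pi (p :: s) = fun x => 1 *: hact p.1 (varphi pi p.2) x + dil pi s x.
  by apply: funext => x; rewrite /dil big_cons scale1r.
have varphi_in := in_dil_varphi pi p.2.
rewrite (w_hlin.1 _ _ _ (in_dil_hact p.1 varphi_in)) ?scale1r; last by eexists.
by rewrite (w_hlin.2 _ _ varphi_in) IHs big_cons.
Qed.

End HLinearMaps.

Section DilationMap.
Variables (k : fieldType) (H : algType k) (M N : lmodType k).
Variables (pi : H -> M -> M) (rho : H -> N -> N) (f : M -> N).
Hypothesis f_pmorph : is_pmorph pi rho f.

Lemma dil_map s : dil rho [seq (p.1, f p.2) | p <- s] = f \o dil pi s.
Proof.
case: f_pmorph => f_lin f_act; apply: funext => x.
by rewrite /dil big_map /= lin_sum //; apply: eq_bigr => p _; rewrite /hact /varphi f_act.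
Qed.

Lemma dilmapE F : in_dil pi F -> dilmap pi rho f F = f \o F.
Proof.
move=> F_in; rewrite /dilmap; set s := epsilon _ _.
by rewrite [in RHS](epsilon_spec _ _ F_in : F = dil pi s) dil_map.
Qed.

Lemma in_dil_dilmap F : in_dil rho (dilmap pi rho f F).
Proof. by eexists. Qed.

Lemma in_dil_comp F : in_dil pi F -> in_dil rho (f \o F).
Proof. by move/dilmapE <-; apply: in_dil_dilmap. Qed.

Lemma dilmap_dil s : dilmap pi rho f (dil pi s) = dil rho [seq (p.1, f p.2) | p <- s].
Proof. by rewrite dilmapE ?dil_map //; eexists. Qed.

Lemma dilmap_hact h F : in_dil pi F -> dilmap pi rho f (hact h F) = hact h (dilmap pi rho f F).
Proof. by move=> F_in; rewrite !dilmapE //; apply: in_dil_hact. Qed.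

Lemma dilmap_comb a F G : (forall h, linear (pi h)) -> in_dil pi F -> in_dil pi G ->
  dilmap pi rho f (fun x => a *: F x + G x)
  = fun x => a *: dilmap pi rho f F x + dilmap pi rho f G x.
Proof.
move=> pi_lin F_in G_in; rewrite !dilmapE //; last exact: in_dil_comb.
by apply: funext => x; case: f_pmorph => f_lin _; rewrite /= f_lin.
Qed.

Lemma dilmap_inj : injective f -> forall F G, in_dil pi F -> in_dil pi G ->
  dilmap pi rho f F = dilmap pi rho f G -> F = G.
Proof.
move=> f_inj F G F_in G_in; rewrite !dilmapE // => eqFG.
by apply: funext => x; apply: f_inj; apply: (congr1 (fun F => F x) eqFG).
Qed.

Lemma dilmap_surj : (forall n, exists m, f m = n) ->
  forall G, in_dil rho G -> exists F, in_dil pi F /\ dilmap pi rho f F = G.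
Proof.
move=> f_surj _ [t ->].
have [s <-] : exists s, [seq (p.1, f p.2) | p <- s] = t.
  elim: t => [|[h n] t [s <-]]; first by exists [::].
  by have [m <-] := f_surj n; exists ((h, m) :: s).
by exists (dil pi s); split; [eexists | apply: dilmap_dil].
Qed.

End DilationMap.

Section DilationFunctor.
Variables (k : fieldType) (H : algType k) (M N P : lmodType k).
Variables (pi : H -> M -> M) (rho : H -> N -> N) (sig : H -> P -> P).

Lemma dilmap_id F : in_dil pi F -> dilmap pi pi id F = F.
Proof. exact: (dilmapE (pmorph_id pi)). Qed.

Lemma dilmap_comp (f : M -> N) (g : N -> P) F :
  is_pmorph pi rho f -> is_pmorph rho sig g -> in_dil pi F ->
  dilmap pi sig (g \o f) F = dilmap rho sig g (dilmap pi rho f F).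
Proof.
move=> f_pmorph g_pmorph F_in.
have gf_pmorph := pmorph_comp f_pmorph g_pmorph.
by rewrite !dilmapE //; apply: (in_dil_comp f_pmorph F_in).
Qed.

Lemma dilmap_add (f g : M -> N) F : (forall h, linear (rho h)) ->
  is_pmorph pi rho f -> is_pmorph pi rho g -> in_dil pi F ->
  dilmap pi rho (fun m => f m + g m) F = fun x => dilmap pi rho f F x + dilmap pi rho g F x.
Proof. by move=> rho_lin f_pmorph g_pmorph F_in; rewrite !dilmapE //; apply: pmorph_add. Qed.

Lemma dilmap_faithful (f g : M -> N) : (forall m, pi 1 m = m) ->
  is_pmorph pi rho f -> is_pmorph pi rho g ->
  (forall F, in_dil pi F -> dilmap pi rho f F = dilmap pi rho g F) -> f =1 g.
Proof.
move=> pi1 f_pmorph g_pmorph eq_fg m.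
have varphi_in := in_dil_varphi pi m.
have := eq_fg _ varphi_in; rewrite !dilmapE // => /(congr1 (fun F => F 1)).
by rewrite /= /varphi pi1.
Qed.

End DilationFunctor.

Section PartialModuleTransfer.
Variables (k : fieldType) (H : algType k) (hp : hopf_data H) (Y C : lmodType k).
Variables (act : H -> Y -> Y) (piC : H -> C -> C) (v : Y -> C).
Hypotheses (v_inj : injective v) (v_pmorph : is_pmorph act piC v).

Lemma pmod_inj_pmorph : is_pmod hp piC -> is_pmod hp act.
Proof.
case: v_pmorph => v_lin v_act.
have v_sum (r : seq (H * H)) (F : H * H -> Y) :
  v (\sum_(p <- r) F p) = \sum_(p <- r) v (F p) by apply: lin_sum.
case=> lin_m lin_h act1 [ax1 ax2 ax3 ax4]; split; [| | |split] => *; apply: v_inj.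
- by rewrite v_act !v_lin !v_act lin_m.
- by rewrite v_lin !v_act lin_h.
- by rewrite v_act act1.
all: rewrite !v_sum; under eq_bigr do rewrite !v_act; under [RHS]eq_bigr do rewrite !v_act.
- exact: ax1.
- exact: ax2.
- exact: ax3.
- exact: ax4.
Qed.

End PartialModuleTransfer.

Section Coproduct.
Variables (k : fieldType) (H : algType k) (hp : hopf_data H) (I : Type).
Variables (Ms : I -> lmodType k) (pis : forall i, H -> Ms i -> Ms i).
Variables (C : lmodType k) (piC : H -> C -> C) (iota : forall i, Ms i -> C).
Arguments pis : clear implicits.
Arguments iota : clear implicits.
Hypotheses (pis_pmod : forall i, is_pmod hp (pis i)) (piC_pmod : is_pmod hp piC).
Hypothesis C_coprod : is_coprod_par hp pis piC iota.

Lemma iota_pmorph i : is_pmorph (pis i) piC (iota i).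
Proof. by case: C_coprod. Qed.

Lemma pis_lin i h : linear (pis i h). Proof. by case: (pis_pmod i) => pis_l *; apply: pis_l. Qed.
Lemma piC_lin h : linear (piC h). Proof. by case: piC_pmod => piC_l *; apply: piC_l. Qed.
Lemma iota_lin i : linear (iota i). Proof. by case: (iota_pmorph i). Qed.

Section Induction.
Variable P : C -> Prop.
Hypotheses (P_lin : forall a x y, P x -> P y -> P (a *: x + y)) (P0 : P 0).
Hypotheses (P_act : forall h c, P c -> P (piC h c)) (P_iota : forall i m, P (iota i m)).

Definition subpmod_pred : {pred C} := fun c => `[< P c >].

Lemma subpmod_closed : GRing.submod_closed subpmod_pred.
Proof.
split=> [|a x y /asboolP Px /asboolP Py]; apply/asboolP; first exact: P0.
exact: P_lin.
Qed.

HB.instance Definition _ := GRing.isSubmodClosed.Build k C subpmod_pred subpmod_closed.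

Definition subpmod := {c : C | c \in subpmod_pred}.
HB.instance Definition _ := [isSub of subpmod for @sval C (fun c => c \in subpmod_pred)].
HB.instance Definition _ := [Choice of subpmod by <:].
HB.instance Definition _ := [SubChoice_isSubLmodule of subpmod by <:].

Definition subpmod_of c (Pc : P c) : subpmod := exist _ c (asboolT Pc).

Definition subpmod_act h (x : subpmod) : subpmod :=
  subpmod_of (P_act h (asboolW (valP x))).

Lemma val_subpmod_pmorph : is_pmorph subpmod_act piC val.
Proof. by split=> [a x y|h x]; rewrite ?SubK. Qed.

Lemma coprod_ind c : P c.
Proof.
have [_ C_univ] := C_coprod.
have iotaP_pmorph i : is_pmorph (pis i) subpmod_act (fun m => subpmod_of (@P_iota i m)).
  have [iota_l iota_act] := iota_pmorph i.
  by split=> *; apply: val_inj; rewrite /= ?SubK; [apply: iota_l | apply: iota_act].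
have [u [u_pmorph u_iota _]] :=
  C_univ _ _ (pmod_inj_pmorph val_inj val_subpmod_pmorph piC_pmod) _ iotaP_pmorph.
have [u0 [_ _ iota_uniq]] := C_univ _ _ piC_pmod _ iota_pmorph.
have -> : c = val (u c).
  transitivity (u0 c); first exact: (iota_uniq id).
  symmetry; apply: (iota_uniq (val \o u)).
  - exact: pmorph_comp val_subpmod_pmorph.
  - by move=> i m /=; rewrite u_iota.
exact: asboolW (valP (u c)).
Qed.

End Induction.

Local Notation elt := {i : I & (Ms i : Type)}.

Definition tagm i (m : Ms i) : elt := existT _ i m.

Definition iota_sum (l : seq elt) : C := \sum_(e <- l) iota (tag e) (tagged e).

Lemma iota_sum_surj c : exists l, c = iota_sum l.
Proof.
apply: (coprod_ind (P := fun c => exists l, c = iota_sum l))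
  => [a _ _ [l ->] [l' ->]||h _ [l ->]|i m].
- exists ([seq tagm (a *: tagged e) | e : elt <- l] ++ l').
  rewrite /iota_sum big_cat big_map scaler_sumr; congr (_ + _).
  by apply: eq_bigr => e _; rewrite linZ //; apply: iota_lin.
- by exists [::]; rewrite /iota_sum big_nil.
- exists [seq tagm (pis (tag e) h (tagged e)) | e : elt <- l].
  rewrite /iota_sum big_map lin_sum; last exact: piC_lin.
  by apply: eq_bigr => e _; case: (iota_pmorph (tag e)) => _ ->.
- by exists [:: tagm m]; rewrite /iota_sum big_seq1.
Qed.

Definition kdelta (j i : I) (m : Ms i) : Ms j :=
  if pselect (i = j) is left e then eq_rect i (fun t => Ms t : Type) m j e else 0.
Arguments kdelta : clear implicits.

Lemma kdelta_id j m : kdelta j j m = m.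
Proof. by rewrite /kdelta; case: pselect => // e; rewrite (Prop_irrelevance e erefl). Qed.

Lemma kdelta_neq j i m : i <> j -> kdelta j i m = 0.
Proof. by rewrite /kdelta; case: pselect. Qed.

Lemma kdelta_pmorph j i : is_pmorph (pis i) (pis j) (kdelta j i).
Proof.
have [-> | neq_ij] := pselect (i = j); first by split=> *; rewrite !kdelta_id.
split=> *; rewrite !kdelta_neq ?scaler0 ?addr0 //.
by rewrite lin0 //; apply: pis_lin.
Qed.

Lemma coprod_proj j : exists p : C -> Ms j,
  is_pmorph piC (pis j) p /\ forall i m, p (iota i m) = kdelta j i m.
Proof.
have [_ C_univ] := C_coprod.
by have [p [p_pmorph p_iota _]] := C_univ _ _ (pis_pmod j) _ (kdelta_pmorph j); exists p.
Qed.

(* A coterm (i, (h, m)) stands for h |> phi_C(iota_i m). *)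
Definition coterm := {i : I & (H * Ms i)%type}.

Definition coterm_of i (p : H * Ms i) : coterm := existT _ i p.

Definition coterm_lift (t : coterm) : H * C := ((tagged t).1, iota (tag t) (tagged t).2).

Definition coterm_proj j (t : coterm) : H * Ms j :=
  ((tagged t).1, kdelta j (tag t) (tagged t).2).

Definition codil (L : seq coterm) : H -> C := dil piC (map coterm_lift L).

Definition coterm_other j (L : seq coterm) := [seq t <- L | ~~ `[< tag t = j >]].

Lemma codil_proj j (p : C -> Ms j) L :
  is_pmorph piC (pis j) p -> (forall i m, p (iota i m) = kdelta j i m) ->
  p \o codil L = dil (pis j) (map (coterm_proj j) L).
Proof.
move=> p_pmorph p_iota; rewrite /codil -(dil_map p_pmorph) -map_comp.
by congr dil; apply: eq_map => t /=; rewrite p_iota.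
Qed.

Lemma codil_split j L : codil L =
  fun x => iota j (dil (pis j) (map (coterm_proj j) L) x) + codil (coterm_other j L) x.
Proof.
apply: funext => x; rewrite /codil /dil !big_map big_filter lin_sum; last exact: iota_lin.
rewrite [X in _ = _ + X]big_mkcond -big_split; apply: eq_bigr => -[i [h m]] _ /=.
rewrite /hact /varphi /=; case: asboolP => [<- | neq_ij] /=.
  by rewrite kdelta_id addr0; case: (iota_pmorph i) => _ ->.
by rewrite kdelta_neq // !lin0 ?add0r //; [apply: iota_lin | apply: pis_lin].
Qed.

Definition coterm_scale a (L : seq coterm) : seq coterm :=
  [seq coterm_of ((tagged t).1, a *: (tagged t).2) | t : coterm <- L].

Definition coterm_hact h (L : seq coterm) : seq coterm :=
  [seq coterm_of (h * (tagged t).1, (tagged t).2) | t : coterm <- L].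

Lemma codil_cat L L' : codil (L ++ L') = fun x => codil L x + codil L' x.
Proof. by rewrite /codil map_cat dil_cat. Qed.

Lemma codil_scale a L : codil (coterm_scale a L) = fun x => a *: codil L x.
Proof.
rewrite /codil -dilZ; last exact: piC_lin.
rewrite -!map_comp; congr dil; apply: eq_map => t /=.
by rewrite /coterm_lift /= linZ //; apply: iota_lin.
Qed.

Lemma codil_hact h L : hact h (codil L) = codil (coterm_hact h L).
Proof. by rewrite /codil hact_dil -!map_comp. Qed.

Lemma codil_surj G : in_dil piC G -> exists L, G = codil L.
Proof.
move=> [s ->]; elim: s => [|[h c] s [L eL]]; first by exists [::].
have [l ->] := iota_sum_surj c.
exists ([seq coterm_of (h, tagged e) | e : elt <- l] ++ L).
rewrite codil_cat -eL; apply: funext => x; rewrite /dil big_cons; congr (_ + _).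
by rewrite /codil /dil !big_map /hact /varphi /= lin_sum //; apply: piC_lin.
Qed.

Section Lift.
Variables (X : lmodType k) (act : H -> X -> X) (g : forall i, (H -> Ms i) -> X).
Arguments g : clear implicits.
Hypotheses (act_hmod : is_hmod act) (g_hlin : forall i, hlin_on (in_dil (pis i)) act (g i)).

Lemma act_lin h : linear (act h).
Proof. by case: act_hmod => act_l *; apply: act_l. Qed.

Definition cosum (L : seq coterm) : X :=
  \sum_(t <- L) act (tagged t).1 (g (tag t) (varphi (pis (tag t)) (tagged t).2)).

Lemma cosum_cat L L' : cosum (L ++ L') = cosum L + cosum L'.
Proof. exact: big_cat. Qed.

Lemma cosum_scale a L : cosum (coterm_scale a L) = a *: cosum L.
Proof.
rewrite /cosum big_map scaler_sumr; apply: eq_bigr => -[i [h m]] _ /=.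
rewrite varphiZ; last exact: pis_lin.
by rewrite (hlin_onZ (g_hlin i)) ?linZ //; [apply: act_lin | apply: in_dil_varphi].
Qed.

Lemma cosum_hact h L : cosum (coterm_hact h L) = act h (cosum L).
Proof.
rewrite /cosum big_map lin_sum; last exact: act_lin.
by apply: eq_bigr => -[i [h' m]] _ /=; case: act_hmod => _ _ _ ->.
Qed.

Lemma cosum_split j L : cosum L =
  g j (dil (pis j) (map (coterm_proj j) L)) + cosum (coterm_other j L).
Proof.
rewrite (hlin_on_dil (g_hlin j)) big_map /cosum big_filter [X in _ = _ + X]big_mkcond -big_split.
apply: eq_bigr => -[i [h m]] _ /=; case: asboolP => [<- | neq_ij] /=.
  by rewrite kdelta_id addr0.
rewrite kdelta_neq // varphi0; last exact: pis_lin.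
by rewrite (hlin_on0 (g_hlin j)) lin0 ?add0r //; apply: act_lin.
Qed.

Lemma cosum_eq0 L : codil L = (fun _ => 0) -> cosum L = 0.
Proof.
(* Induction on the length: with j the index of the first coterm, p_j kills
   all coterms indexed by j, which can then be dropped. *)
move: {2}(size L) (leqnn (size L)) => n.
elim: n L => [|n IHn] [|t L] //=; try by rewrite /cosum big_nil.
move=> size_L L0; set j := tag t.
have [p [p_pmorph p_iota]] := coprod_proj j.
have proj0 : dil (pis j) (map (coterm_proj j) (t :: L)) = fun _ => 0.
  rewrite -(codil_proj _ p_pmorph p_iota) L0; apply: funext => x /=.
  by case: p_pmorph => p_lin _; rewrite lin0.
rewrite (cosum_split j) proj0 (hlin_on0 (g_hlin j)) add0r; apply: IHn.
  rewrite /coterm_other /=; case: asboolP => //= _.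
  by rewrite size_filter (leq_trans (count_size _ _)).
apply: funext => x; have := congr1 (fun F => F x) (codil_split j (t :: L)).
by rewrite L0 proj0 lin0 ?add0r //; apply: iota_lin.
Qed.

Lemma cosum_codil L L' : codil L = codil L' -> cosum L = cosum L'.
Proof.
move=> eqLL'; apply/eqP; rewrite -subr_eq0 -scaleN1r -cosum_scale -cosum_cat.
apply/eqP/cosum_eq0; apply: funext => x.
by rewrite codil_cat codil_scale /= eqLL' scaleN1r addrN.
Qed.

Definition colift (G : H -> C) : X :=
  cosum (epsilon (inhabits [::]) (fun L => G = codil L)).

Lemma colift_codil L : colift (codil L) = cosum L.
Proof.
apply: cosum_codil.
by rewrite -(epsilon_spec (inhabits [::]) (fun L' => codil L = codil L')); last exists L.
Qed.

Lemma colift_hlin : hlin_on (in_dil piC) act colift.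
Proof.
split=> [a F G /codil_surj [L ->] /codil_surj [L' ->] | h F /codil_surj [L ->]].
  have -> : (fun x => a *: codil L x + codil L' x) = codil (coterm_scale a L ++ L').
    by rewrite codil_cat codil_scale.
  by rewrite !colift_codil cosum_cat cosum_scale.
by rewrite codil_hact !colift_codil cosum_hact.
Qed.

Lemma colift_iota i F : in_dil (pis i) F -> colift (dilmap (pis i) piC (iota i) F) = g i F.
Proof.
move=> [s ->]; rewrite (dilmap_dil (iota_pmorph i)).
have -> : [seq (p.1, iota i p.2) | p <- s] = map coterm_lift (map (@coterm_of i) s).
  by rewrite -map_comp.
by rewrite -/(codil _) colift_codil (hlin_on_dil (g_hlin i)) /cosum big_map.
Qed.

Lemma colift_unique v : hlin_on (in_dil piC) act v ->
  (forall i F, in_dil (pis i) F -> v (dilmap (pis i) piC (iota i) F) = g i F) ->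
  forall G, in_dil piC G -> v G = colift G.
Proof.
move=> v_hlin v_iota G /codil_surj [L ->].
rewrite colift_codil /codil (hlin_on_dil v_hlin) big_map; apply: eq_bigr => -[i [h m]] _ /=.
have varphi_in := in_dil_varphi (pis i) m.
rewrite -(v_iota _ _ varphi_in) (dilmapE (iota_pmorph i) varphi_in).
by congr (act h (v _)); apply: funext => x; rewrite /varphi /=; case: (iota_pmorph i) => _ ->.
Qed.

End Lift.

End Coproduct.

Theorem dil_coprod (k : fieldType) (H : algType k) (hp : hopf_data H) (I : Type)
  (Ms : I -> lmodType k) (pis : forall i, H -> Ms i -> Ms i)
  (C : lmodType k) (piC : H -> C -> C) (iota : forall i, Ms i -> C) :
  (forall i, is_pmod hp (pis i)) -> is_pmod hp piC -> is_coprod_par hp pis piC iota ->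
  is_coprod_hmod pis piC (fun i => dilmap (pis i) piC (iota i)).
Proof.
move=> pis_pmod piC_pmod C_coprod X act act_hmod g g_hlin.
exists (colift pis piC iota act g); split.
- exact: colift_hlin.
- exact: colift_iota.
- exact: colift_unique.
Qed.

Theorem mainTheorem9 (k : fieldType) (H : algType k) (hp : hopf_data H) :
  is_hopf hp ->
  [/\
  (* fbar is well defined by the formula, lands in Nbar, and is H-linear *)
  (forall (M N : lmodType k) (pi : H -> M -> M) (rho : H -> N -> N) (f : M -> N),
     is_pmod hp pi -> is_pmod hp rho -> is_pmorph pi rho f ->
     [/\ (forall s : seq (H * M),
            dilmap pi rho f (dil pi s) = dil rho (map (fun p => (p.1, f p.2)) s)),
         (forall F, in_dil pi F -> in_dil rho (dilmap pi rho f F)),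
         (forall a F G, in_dil pi F -> in_dil pi G ->
            dilmap pi rho f (fun x => a *: F x + G x)
            = (fun x => a *: dilmap pi rho f F x + dilmap pi rho f G x)) &
         (forall h F, in_dil pi F ->
            dilmap pi rho f (hact h F) = hact h (dilmap pi rho f F))]),
  (* D preserves identities *)
  (forall (M : lmodType k) (pi : H -> M -> M), is_pmod hp pi ->
     forall F, in_dil pi F -> dilmap pi pi (fun m => m) F = F),
  (* D preserves composition *)
  (forall (M N P : lmodType k) (pi : H -> M -> M) (rho : H -> N -> N)
          (sig : H -> P -> P) (f : M -> N) (g : N -> P),
     is_pmod hp pi -> is_pmod hp rho -> is_pmod hp sig ->
     is_pmorph pi rho f -> is_pmorph rho sig g ->
     forall F, in_dil pi F ->
       dilmap pi sig (fun m => g (f m)) F = dilmap rho sig g (dilmap pi rho f F)),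
  (* D is additive and faithful *)
  (forall (M N : lmodType k) (pi : H -> M -> M) (rho : H -> N -> N) (f g : M -> N),
     is_pmod hp pi -> is_pmod hp rho -> is_pmorph pi rho f -> is_pmorph pi rho g ->
     (forall F, in_dil pi F ->
        dilmap pi rho (fun m => f m + g m) F
        = (fun x => dilmap pi rho f F x + dilmap pi rho g F x)) /\
     ((forall F, in_dil pi F -> dilmap pi rho f F = dilmap pi rho g F) ->
        forall m, f m = g m)) &
  (* D preserves injective and surjective morphisms *)
  (forall (M N : lmodType k) (pi : H -> M -> M) (rho : H -> N -> N) (f : M -> N),
     is_pmod hp pi -> is_pmod hp rho -> is_pmorph pi rho f ->
     (injective f -> forall F G, in_dil pi F -> in_dil pi G ->
        dilmap pi rho f F = dilmap pi rho f G -> F = G) /\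
     ((forall n, exists m, f m = n) -> forall G, in_dil rho G ->
        exists F, in_dil pi F /\ dilmap pi rho f F = G))] /\
  (* D preserves arbitrary coproducts *)
  (forall (I : Type) (Ms : I -> lmodType k) (pis : forall i, H -> Ms i -> Ms i)
          (C : lmodType k) (piC : H -> C -> C) (iota : forall i, Ms i -> C),
     (forall i, is_pmod hp (pis i)) -> is_pmod hp piC ->
     is_coprod_par hp pis piC iota ->
     is_coprod_hmod pis piC (fun i => dilmap (pis i) piC (iota i))).
Proof.
move=> _; split; last exact: dil_coprod.
split.
- move=> M N pi rho f [pi_lin _ _ _] _ f_pmorph; split.
  + exact: dilmap_dil.
  + by move=> F _; apply: in_dil_dilmap.
  + by move=> a F G; apply: dilmap_comb.
  + exact: dilmap_hact.
- by move=> M pi _ F; apply: dilmap_id.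
- by move=> M N P pi rho sig f g _ _ _ f_pmorph g_pmorph F; apply: dilmap_comp.
- move=> M N pi rho f g [_ _ pi1 _] [rho_lin _ _ _] f_pmorph g_pmorph; split.
  + by move=> F; apply: dilmap_add.
  + exact: dilmap_faithful.
- by move=> M N pi rho f _ _ f_pmorph; split; [apply: dilmap_inj | apply: dilmap_surj].
Qed.
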